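(* Let $\mathcal T=(T,\lambda)$ be a temporal oriented tree with connectivity graph $G$, and let $H$ be an induced cycle of $G$ of length at least $4$. Then for every vertex $v\in V(H)$ and every arc $a$ of $T$ incident with $v$, all vertices of $V(H)\setminus\{v\}$ lie in the same connected component of $T\setminus\{a\}$ (the forest obtained from $T$ by deleting the arc $a$).
   Context: A temporal digraph is a pair $(D,\lambda)$ with $D=(V,A)$ a finite digraph and $\lambda:A\to 2^{\{1,\dots,t_{\max}\}}$ giving the time-steps at which each arc is active. A temporal oriented tree $\mathcal T=(T,\lambda)$ is one whose underlying digraph $T$ is an orientation of a tree. A temporal path is a sequence $(v_1,v_2,t_1),\dots,(v_{k-1},v_k,t_{k-1})$ with pairwise distinct $v_i$, $\overrightarrow{v_iv_{i+1}}\in A$, $t_i\in\lambda(\overrightarrow{v_iv_{i+1}})$ and $t_1<\dots<t_{k-1}$. Two vertices $u\ne v$ are temporally connected if there is a temporal path from $u$ to $v$ or from $v$ to $u$. The connectivity graph of $\mathcal T$ is the undirected graph $G$ with $V(G)=V(T)$ and $uv\in E(G)$ iff $u\neq v$ and $u,v$ are temporally connected. *)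

From mathcomp Require Import all_boot.
Set Implicit Arguments. Unset Strict Implicit. Unset Printing Implicit Defensive.

(* A digraph on a finite vertex type V is given by its arc relation A : rel V.
   The labelling lam assigns to each ordered pair (x,y) a list of time-steps;
   only its values on arcs (A x y) matter. *)

Section Temporal.
Variable V : finType.
Variable A : rel V.
Variable lam : V -> V -> seq nat.

Definition und : rel V := fun x y => A x y || A y x.

Definition oriented_tree : Prop :=
  [/\ irreflexive A,
      (forall x y, A x y -> ~~ A y x),
      (forall x y, connect und x y) &
      (forall s : seq V, uniq s -> 3 <= size s -> ~~ cycle und s)].

Definition labels_in (tmax : nat) : Prop :=
  forall x y t, A x y -> t \in lam x y -> 1 <= t <= tmax.

Fixpoint arc_walk (u : V) (p : seq (V * nat)) : bool :=
  match p with
  | [::] => true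
  | (w, t) :: p' => [&& A u w, t \in lam u w & arc_walk w p']
  end.

Definition temporal_path (u v : V) (p : seq (V * nat)) : bool :=
  [&& arc_walk u p, uniq (u :: map fst p), sorted ltn (map snd p)
    & last u (map fst p) == v].

Definition temporally_connected (u v : V) : Prop :=
  u != v /\
  ((exists p, temporal_path u v p) \/ (exists p, temporal_path v u p)).

Definition conn_edge (u v : V) : Prop := temporally_connected u v.

(* H = c_0 c_1 ... c_{k-1} c_0 is an induced cycle of G of length k = size c *)
Definition induced_cycle (c : seq V) : Prop :=
  let k := size c in
  [/\ 3 <= k, uniq c &
      forall (x0 : V) i j, i < k -> j < k ->
        (conn_edge (nth x0 c i) (nth x0 c j) <->
         (j == (i.+1) %% k) || (i == (j.+1) %% k))].

(* the forest T \ {a}, for the arc a = (x,y): undirected edges of T except xy *)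
Definition und_minus (x y : V) : rel V :=
  fun p q => und p q && ~~ (((p == x) && (q == y)) || ((p == y) && (q == x))).

End Temporal.

From mathcomp Require Import all_boot zify.
Set Implicit Arguments. Unset Strict Implicit.

(* Let a = xy be an arc at v and let p, q be consecutive vertices of H other
   than v.  If p and q were separated in T \ a, every temporal path between
   them would have to pass through v, making v temporally connected to both
   p and q; together with pq this is a triangle in the induced cycle H, which
   is impossible when |H| >= 4.  Hence consecutive vertices of H - v are
   connected in T \ a, and H - v is a path. *)

Section TemporalPaths.
Variables (V : finType) (A : rel V) (lam : V -> V -> seq nat).

Lemma arc_walk_cat u p1 p2 :
  arc_walk A lam u (p1 ++ p2) =
  arc_walk A lam u p1 && arc_walk A lam (last u (map fst p1)) p2.
Proof. by elim: p1 u => [|[w t] p1 IH] u //=; rewrite IH !andbA. Qed.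

Lemma temporal_path_split u w p1 v t p2 :
  temporal_path A lam u w (p1 ++ (v, t) :: p2) ->
  temporal_path A lam u v (rcons p1 (v, t)) /\ temporal_path A lam v w p2.
Proof.
rewrite -cat_rcons /temporal_path arc_walk_cat !map_cat -cat_cons cat_uniq.
rewrite last_cat !map_rcons last_rcons /=.
move=> /and4P[/andP[-> ->] /and3P[-> vNp2 ->] /cat_sorted2[-> ->] ->] /=.
rewrite eqxx !andbT; split=> //; apply: contra vNp2 => vp2.
by apply/hasP; exists v; rewrite // in_cons mem_rcons mem_head orbT.
Qed.

Lemma temporally_connected_sym u v :
  temporally_connected A lam u v -> temporally_connected A lam v u.
Proof. by case=> ne [h|h]; split; rewrite 1?eq_sym //; [right|left]. Qed.

Variables x y : V.

Lemma und_minus_sym : symmetric (und_minus A x y).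
Proof.
move=> p q; rewrite /und_minus /und orbC; congr (_ && ~~ _).
by rewrite orbC (andbC (q == x)) (andbC (q == y)).
Qed.

Variable v : V.
Hypothesis v_xy : (v == x) || (v == y).

Lemma arc_walk_avoid_connect u p :
  arc_walk A lam u p -> v \notin u :: map fst p ->
  connect (und_minus A x y) u (last u (map fst p)).
Proof.
elim: p u => [|[z t] p IH] u /=; first by rewrite connect0.
move=> /and3P[Auz _ walk_p]; rewrite !in_cons !negb_or => /and3P[uv zv vNp].
apply: connect_trans (IH z walk_p _); last by rewrite in_cons negb_or zv.
apply: connect1; rewrite /und_minus /und Auz /=.
move: uv zv; rewrite ![v == _]eq_sym => uv zv.
by case/orP: v_xy => /eqP vE; subst v; rewrite (negbTE uv) (negbTE zv) ?andbF.
Qed.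

Lemma temporal_path_separated u w p :
  temporal_path A lam u w p -> u != v -> w != v ->
  ~~ connect (und_minus A x y) u w ->
  temporally_connected A lam u v /\ temporally_connected A lam v w.
Proof.
move=> path_p uv wv sep; have [walk_p _ _ /eqP last_p] := and4P path_p.
have /mapP[[z t] zp /= vz] : v \in map fst p.
  case: (boolP (v \in u :: map fst p)) => [|vNp].
    by rewrite in_cons eq_sym (negbTE uv).
  by move: (arc_walk_avoid_connect walk_p vNp); rewrite last_p (negbTE sep).
subst z; case/splitPr: zp path_p => p1 p2 /temporal_path_split[path1 path2].
by split; split; rewrite 1?(eq_sym v) //; left; [exists (rcons p1 (v, t)) | exists p2].
Qed.

Lemma conn_edge_separated p q :
  p != v -> q != v -> conn_edge A lam p q -> ~~ connect (und_minus A x y) p q ->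
  conn_edge A lam v p /\ conn_edge A lam v q.
Proof.
move=> pv qv [_ [[P path_P]|[P path_P]]] sep.
- have [vp vq] := temporal_path_separated path_P pv qv sep.
  by split=> //; apply: temporally_connected_sym.
- rewrite (sym_connect_sym und_minus_sym) in sep.
  have [qv' vp] := temporal_path_separated path_P qv pv sep.
  by split=> //; apply: temporally_connected_sym.
Qed.

End TemporalPaths.

Definition cycle_adj (k i j : nat) := (j == i.+1 %% k) || (i == j.+1 %% k).

Lemma modS_small k i : i < k -> i.+1 %% k = (if i.+1 == k then 0 else i.+1).
Proof. by move=> ik; case: eqP => [->|?]; rewrite ?modnn // modn_small; lia. Qed.

Lemma cycle_adj_triangle_free k a b d : 4 <= k -> a < k -> b < k -> d < k ->
  cycle_adj k a b -> cycle_adj k a d -> cycle_adj k b d -> False.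
Proof.
rewrite /cycle_adj => k4 ak bk dk; rewrite !modS_small //.
by case: (a.+1 =P k) => ?; case: (b.+1 =P k) => ?; case: (d.+1 =P k) => ?;
  move=> /orP[]/eqP ? /orP[]/eqP ? /orP[]/eqP ?; lia.
Qed.

Lemma addn_modn_neq k i m : 0 < m < k -> i < k -> (i + m) %% k != i.
Proof.
move=> mk ik; case: (ltnP (i + m) k) => h; first by rewrite modn_small //; lia.
by rewrite -[i + m](@subnK k) // modnDr modn_small; lia.
Qed.

Lemma modn_shift_onto k i j : i < k -> j < k -> j != i ->
  exists2 m, 0 < m < k & (i + m) %% k = j.
Proof.
move=> ik jk ji; case: (leqP i j) => h.
  by exists (j - i); [lia | rewrite subnKC // modn_small].
exists (j + k - i); first by lia.
by rewrite subnKC ?modnDr ?modn_small //; lia.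
Qed.

Section CycleMinusVertex.
Variables (T : finType) (e : rel T) (c : seq T) (x0 : T) (i : nat).
Hypotheses (e_sym : connect_sym e) (ik : i < size c).
Let k := size c.
Hypothesis consecutive_connect : forall j, j < k -> j != i -> j.+1 %% k != i ->
  connect e (nth x0 c j) (nth x0 c (j.+1 %% k)).

Lemma connect_cycle_minus a b : a < k -> b < k -> a != i -> b != i ->
  connect e (nth x0 c a) (nth x0 c b).
Proof.
pose f m := nth x0 c ((i + m) %% k).
have from_first m : 0 < m < k -> connect e (f 1) (f m).
  elim: m => [|m IH] // /andP[_ mk]; case: (posnP m) => [->|m0]; first exact: connect0.
  apply: connect_trans (IH _) _; first by lia.
  rewrite /f; have -> : (i + m.+1) %% k = ((i + m) %% k).+1 %% k.
    by rewrite addnS -addn1 -(addn1 ((i + m) %% k)) modnDml.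
  apply: consecutive_connect; first by rewrite ltn_mod; lia.
    by apply: addn_modn_neq; lia.
  by rewrite -addn1 modnDml -addnA addn1; apply: addn_modn_neq; lia.
move=> ak bk ai bi.
have [ma ma_k <-] := modn_shift_onto ik ak ai.
have [mb mb_k <-] := modn_shift_onto ik bk bi.
by apply: connect_trans (from_first _ mb_k); rewrite e_sym; apply: from_first.
Qed.

End CycleMinusVertex.

Theorem mainTheorem7 (V : finType) (A : rel V) (tmax : nat)
    (lam : V -> V -> seq nat) (c : seq V) :
  oriented_tree A ->
  labels_in A lam tmax ->
  induced_cycle A lam c ->
  4 <= size c ->
  forall (v : V) (x y : V),
    v \in c -> A x y -> (v == x) || (v == y) ->
    forall w1 w2 : V, w1 \in c -> w2 \in c -> w1 != v -> w2 != v ->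
      connect (und_minus A x y) w1 w2.
Proof.
move=> _ _ [_ c_uniq c_adj] k4 v x y vc _ v_xy w1 w2 w1c w2c w1v w2v.
have ik : index v c < size c by rewrite index_mem.
have nth_neq_v j : j < size c -> j != index v c -> nth v c j != v.
  by move=> jk; apply: contra => /eqP <-; rewrite index_uniq.
have index_neq w : w \in c -> w != v -> index w c != index v c.
  by move=> wc; apply: contra => /eqP e; rewrite -(nth_index v wc) e nth_index.
rewrite -(nth_index v w1c) -(nth_index v w2c).
apply: (connect_cycle_minus (sym_connect_sym (und_minus_sym A x y)) ik);
  rewrite ?index_mem ?index_neq // => j jk ji j'i.
have j'k : j.+1 %% size c < size c by rewrite ltn_mod; lia.
have adj_v a b : a < size c -> b < size c ->
    conn_edge A lam (nth v c a) (nth v c b) -> cycle_adj (size c) a b.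
  by move=> ak bk /(c_adj v a b ak bk).
apply/negPn/negP => sep.
have e_jj' : conn_edge A lam (nth v c j) (nth v c (j.+1 %% size c)).
  by apply/(c_adj v _ _ jk j'k); rewrite eqxx.
have [vj vj'] :=
  conn_edge_separated v_xy (nth_neq_v _ jk ji) (nth_neq_v _ j'k j'i) e_jj' sep.
apply: (cycle_adj_triangle_free k4 ik jk j'k); apply: adj_v => //;
  by rewrite nth_index.
Qed.
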